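(* Let $K\subset\mathbb{R}$ be a real quadratic field with nontrivial automorphism $x\mapsto x'$, let $L\subset K$ be a pseudolattice, and for $t\in\mathbb{R}$ let $\Lambda_t(L)=\{le^{t/2}+il'e^{-t/2}: l\in L\}\subset\mathbb{C}$. Equip $\mathbb{C}$ with the pairing $(x\cdot y)=\mathrm{Im}(xy)=x_0y_1+x_1y_0$ for $x=x_0+ix_1$, $y=y_0+iy_1$, and set $\Lambda_t(L)^!=\{\mu\in\mathbb{C}:(\lambda\cdot\mu)\in\mathbb{Z}\ \text{for all }\lambda\in\Lambda_t(L)\}$. Let $M=L^?=\{m\in K:\mathrm{tr}_{K/\mathbb{Q}}(l'm)\in\mathbb{Z}\ \text{for all } l\in L\}$. Then $$\Lambda_t(L)^!=\Lambda_t(M)=\{me^{t/2}+im'e^{-t/2}: m\in M\}.$$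
   Context: A pseudolattice $L\subset K$ is a subgroup of $K$ that is free abelian of rank 2 and spans $K$ over $\mathbb{Q}$. *)

From HB Require Import structures.
From mathcomp Require Import all_boot all_order all_algebra.
From mathcomp Require Import all_classical all_reals all_analysis.
Unset Printing Implicit Defensive.
Import Order.TTheory GRing.Theory Num.Theory.
Local Open Scope ring_scope.

(* The real quadratic field K = Q(sqrt d) (d a positive non-square integer),
   elements represented by rational coordinates (a, b) <-> a + b sqrt d. *)
Definition QK := (rat * rat)%type.

Definition nonsquare (d : nat) : Prop := forall k : nat, (k * k != d)%N.

Definition zeroK : QK := (0, 0).
Definition addK (x y : QK) : QK := (x.1 + y.1, x.2 + y.2).
Definition oppK (x : QK) : QK := (- x.1, - x.2).
Definition scaleK (q : rat) (x : QK) : QK := (q * x.1, q * x.2).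
Definition mulK (d : nat) (x y : QK) : QK :=
  (x.1 * y.1 + d%:R * x.2 * y.2, x.1 * y.2 + x.2 * y.1).
Definition conjK (x : QK) : QK := (x.1, - x.2).
Definition trK (x : QK) : rat := 2 * x.1.

Definition embK (R : realType) (d : nat) (x : QK) : R :=
  ratr x.1 + ratr x.2 * Num.sqrt (d%:R : R).

Definition subgroupK (L : QK -> Prop) : Prop :=
  L zeroK /\ (forall x y, L x -> L y -> L (addK x (oppK y))).

Definition free_rank2 (L : QK -> Prop) : Prop :=
  exists w1 w2 : QK, L w1 /\ L w2 /\
    (forall x, L x -> exists m n : int,
        x = addK (scaleK m%:~R w1) (scaleK n%:~R w2)) /\
    (forall m n m' n' : int,
        addK (scaleK m%:~R w1) (scaleK n%:~R w2) =
        addK (scaleK m'%:~R w1) (scaleK n'%:~R w2) -> m = m' /\ n = n').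

Definition spansQ (L : QK -> Prop) : Prop :=
  forall x : QK, exists s : seq (rat * QK),
    (forall p, p \in s -> L p.2) /\
    x = foldr (fun p acc => addK (scaleK p.1 p.2) acc) zeroK s.

Definition pseudolattice (L : QK -> Prop) : Prop :=
  subgroupK L /\ free_rank2 L /\ spansQ L.

(* C represented as R * R, x = x.1 + i x.2 *)
Definition Lam (R : realType) (d : nat) (t : R) (l : QK) : R * R :=
  (embK R d l * expR (t / 2), embK R d (conjK l) * expR (- t / 2)).

Definition pairing (R : realType) (x y : R * R) : R := x.1 * y.2 + x.2 * y.1.

Definition Lam_dual (R : realType) (d : nat) (t : R) (L : QK -> Prop) (mu : R * R) : Prop :=
  forall l, L l -> pairing R (Lam R d t l) mu \is a Num.int.

Definition Ldual (d : nat) (L : QK -> Prop) (m : QK) : Prop :=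
  forall l, L l -> trK (mulK d (conjK l) m) \is a Num.int.

From HB Require Import structures.
From mathcomp Require Import all_boot all_order all_algebra.
From mathcomp Require Import all_classical all_reals all_analysis.
From mathcomp Require Import ring.
Import Order.TTheory GRing.Theory Num.Theory.
Local Open Scope ring_scope.

(* Lam_t carries the trace form (l, m) |-> tr(l' m) of K to the pairing on C,
   because the factors e^(t/2) and e^(-t/2) cancel; hence Lam_t(L^?) lies in
   Lam_t(L)^!.  Conversely, let mu be in Lam_t(L)^! and let w1, w2 be a basis
   of L.  The trace form is nondegenerate, so there is m in K with
   tr(w_i' m) = (Lam_t(w_i) . mu) for i = 1, 2; this m lies in L^?, and
   mu = Lam_t(m) since both pair in the same way with Lam_t(w1) and Lam_t(w2),
   which are linearly independent over R. *)

Section Cramer2.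
Context {F : fieldType} {p q r s : F}.
Hypothesis det_neq0 : p * s - q * r != 0.

Lemma cramer2_exists (u v : F) :
  exists x y : F, p * x + q * y = u /\ r * x + s * y = v.
Proof.
exists ((s * u - q * v) / (p * s - q * r)), ((p * v - r * u) / (p * s - q * r)).
by split; field.
Qed.

Lemma cramer2_uniq {x y x' y' : F} :
  p * x + q * y = p * x' + q * y' -> r * x + s * y = r * x' + s * y' ->
  x = x' /\ y = y'.
Proof.
move=> e1 e2.
have dx : (p * s - q * r) * (x - x') =
  s * (p * x + q * y - (p * x' + q * y')) - q * (r * x + s * y - (r * x' + s * y')).
  by ring.
have dy : (p * s - q * r) * (y - y') =
  p * (r * x + s * y - (r * x' + s * y')) - r * (p * x + q * y - (p * x' + q * y')).
  by ring.
rewrite e1 e2 !subrr !mulr0 subrr in dx dy.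
move/eqP: dx; move/eqP: dy.
by rewrite !mulf_eq0 (negPf det_neq0) !subr_eq0 => /eqP-> /eqP->.
Qed.

End Cramer2.

Definition detK (w1 w2 : QK) : rat := w1.1 * w2.2 - w1.2 * w2.1.

Lemma int_coords_uniq_rat_indep (w1 w2 : QK) :
  (forall m n m' n' : int,
      addK (scaleK m%:~R w1) (scaleK n%:~R w2) =
      addK (scaleK m'%:~R w1) (scaleK n'%:~R w2) -> m = m' /\ n = n') ->
  forall q1 q2 : rat,
    addK (scaleK q1 w1) (scaleK q2 w2) = zeroK -> q1 = 0 /\ q2 = 0.
Proof.
move=> huniq q1 q2; rewrite /addK /scaleK /zeroK => -[r1 r2].
have cleared : addK (scaleK (numq q1 * denq q2)%:~R w1) (scaleK (numq q2 * denq q1)%:~R w2)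
             = addK (scaleK 0%:~R w1) (scaleK 0%:~R w2).
  rewrite /addK /scaleK /= !intrM !numqE !mul0r !addr0.
  congr (_, _).
    by rewrite -[RHS](mulr0 ((denq q1)%:~R * (denq q2)%:~R)) -r1; ring.
  by rewrite -[RHS](mulr0 ((denq q1)%:~R * (denq q2)%:~R)) -r2; ring.
have [/eqP n1 /eqP n2] := huniq _ _ _ _ cleared.
move: n1 n2; rewrite !mulf_eq0 !denq_eq0 !orbF !numq_eq0.
by move=> /eqP-> /eqP->.
Qed.

Lemma rat_indep_detK_neq0 (w1 w2 : QK) :
  (forall q1 q2 : rat,
      addK (scaleK q1 w1) (scaleK q2 w2) = zeroK -> q1 = 0 /\ q2 = 0) ->
  detK w1 w2 != 0.
Proof.
case: w1 w2 => [a b] [c e] indep; apply/eqP; rewrite /detK /= => det0.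
(* A vanishing determinant makes (e, -b) and (c, -a) relations, forcing w1 = 0. *)
have [e0 b0] : e = 0 /\ - b = 0.
  apply: indep; rewrite /addK /scaleK /zeroK /=.
  by congr (_, _); [rewrite -det0 | ]; ring.
have [c0 a0] : c = 0 /\ - a = 0.
  apply: indep; rewrite /addK /scaleK /zeroK /=.
  by congr (_, _); [ | rewrite -oppr0 -det0]; ring.
have [] : 1 = 0 :> rat /\ 0 = 0 :> rat.
  apply: indep; move/eqP: a0; move/eqP: b0; rewrite !oppr_eq0 => /eqP-> /eqP->.
  by rewrite /addK /scaleK /zeroK /= !mulr0 !mul0r !addr0.
by move/eqP; rewrite oner_eq0.
Qed.

Lemma pseudolattice_basis {L : QK -> Prop} :
  pseudolattice L ->
  exists w1 w2 : QK, [/\ L w1, L w2,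
    forall l, L l -> exists m n : int, l = addK (scaleK m%:~R w1) (scaleK n%:~R w2)
    & detK w1 w2 != 0].
Proof.
case=> _ [[w1 [w2 [Lw1 [Lw2 [span uniq]]]]] _].
exists w1, w2; split => //.
exact/rat_indep_detK_neq0/int_coords_uniq_rat_indep.
Qed.

Lemma trK_conj_mul (d : nat) (w m : QK) :
  trK (mulK d (conjK w) m) = 2 * w.1 * m.1 + (- 2 * d%:R * w.2) * m.2.
Proof. by rewrite /trK /mulK /conjK /=; ring. Qed.

Lemma trK_conj_mul_addK (d : nat) (a b : rat) (w1 w2 m : QK) :
  trK (mulK d (conjK (addK (scaleK a w1) (scaleK b w2))) m) =
  a * trK (mulK d (conjK w1) m) + b * trK (mulK d (conjK w2) m).
Proof. by rewrite !trK_conj_mul /addK /scaleK /=; ring. Qed.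

Lemma Ldual_of_basis {d : nat} {L : QK -> Prop} {w1 w2 m : QK} :
  (forall l, L l -> exists a b : int, l = addK (scaleK a%:~R w1) (scaleK b%:~R w2)) ->
  trK (mulK d (conjK w1) m) \is a Num.int -> trK (mulK d (conjK w2) m) \is a Num.int ->
  Ldual d L m.
Proof.
move=> span int1 int2 l /span [a [b ->]].
by rewrite trK_conj_mul_addK rpredD // rpredM // intr_int.
Qed.

Lemma trK_conj_mul_solvable {d : nat} {w1 w2 : QK} :
  d != 0%N -> detK w1 w2 != 0 -> forall u v : rat,
  exists m : QK, trK (mulK d (conjK w1) m) = u /\ trK (mulK d (conjK w2) m) = v.
Proof.
move=> d0 det0 u v.
have det_tr : (2 * w1.1) * (- 2 * d%:R * w2.2) - (- 2 * d%:R * w1.2) * (2 * w2.1) != 0.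
  have -> : (2 * w1.1) * (- 2 * d%:R * w2.2) - (- 2 * d%:R * w1.2) * (2 * w2.1)
    = - (4 * d%:R * detK w1 w2) by rewrite /detK; ring.
  by rewrite oppr_eq0 !mulf_neq0 // pnatr_eq0.
have [x [y [eu ev]]] := cramer2_exists det_tr u v.
by exists (x, y); rewrite !trK_conj_mul.
Qed.

Section RealEmbedding.
Context {R : realType}.

Lemma ratr_trK_conj_mul (d : nat) (l m : QK) :
  ratr (trK (mulK d (conjK l) m)) =
  embK R d l * embK R d (conjK m) + embK R d (conjK l) * embK R d m.
Proof.
rewrite /trK /mulK /conjK /embK /= !(rmorphD, rmorphM, rmorphN) /= !ratr_nat.
set s := Num.sqrt _; have <- : s ^+ 2 = d%:R by rewrite sqr_sqrtr // ler0n.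
by ring.
Qed.

Lemma embK_det (d : nat) (w1 w2 : QK) :
  embK R d w1 * embK R d (conjK w2) - embK R d (conjK w1) * embK R d w2 =
  - (2 * Num.sqrt (d%:R : R) * ratr (detK w1 w2)).
Proof. by rewrite /embK /conjK /detK /= !(rmorphB, rmorphM, rmorphN); ring. Qed.

Lemma expR_half_mulN (t : R) : expR (t / 2) * expR (- t / 2) = 1.
Proof. by rewrite -expRD mulNr addrN expR0. Qed.

Lemma pairing_Lam (d : nat) (t : R) (l m : QK) :
  pairing R (Lam R d t l) (Lam R d t m) = ratr (trK (mulK d (conjK l) m)).
Proof.
rewrite ratr_trK_conj_mul /pairing /Lam /= mulrACA [X in _ + X]mulrACA.
by rewrite [expR (- t / 2) * _]mulrC expR_half_mulN !mulr1.
Qed.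

Lemma Lam_det (d : nat) (t : R) (w1 w2 : QK) :
  (Lam R d t w1).1 * (Lam R d t w2).2 - (Lam R d t w1).2 * (Lam R d t w2).1 =
  - (2 * Num.sqrt (d%:R : R) * ratr (detK w1 w2)).
Proof.
rewrite -embK_det /Lam /= mulrACA [X in _ - X]mulrACA.
by rewrite [expR (- t / 2) * _]mulrC expR_half_mulN !mulr1.
Qed.

Lemma Lam_det_neq0 {d : nat} (t : R) {w1 w2 : QK} :
  d != 0%N -> detK w1 w2 != 0 ->
  (Lam R d t w1).1 * (Lam R d t w2).2 - (Lam R d t w1).2 * (Lam R d t w2).1 != 0.
Proof.
move=> d0 det0; rewrite Lam_det oppr_eq0 mulf_neq0 ?fmorph_eq0 //.
by rewrite mulf_neq0 // gt_eqF // sqrtr_gt0 ltr0n lt0n.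
Qed.

Lemma pairing_eq2 {u v mu nu : R * R} :
  u.1 * v.2 - u.2 * v.1 != 0 ->
  pairing R u mu = pairing R u nu -> pairing R v mu = pairing R v nu -> mu = nu.
Proof.
move=> det0 eu ev; case: (cramer2_uniq det0 eu ev) => e2 e1.
by case: mu nu e1 e2 {eu ev} => [? ?] [? ?] /= -> ->.
Qed.

End RealEmbedding.

Theorem lemma4p8p1 (R : realType) (d : nat) (hd : nonsquare d)
    (L : QK -> Prop) (hL : pseudolattice L) (t : R) :
  forall mu : R * R,
    Lam_dual R d t L mu <-> exists m : QK, Ldual d L m /\ mu = Lam R d t m.
Proof.
have d0 : d != 0%N by rewrite eq_sym -(muln0 0); apply: hd.
move=> mu; split=> [dual | [m [Mm ->]] l Ll]; last first.
  by rewrite pairing_Lam; have /intrP [z ->] := Mm l Ll; rewrite ratr_int intr_int.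
have [w1 [w2 [Lw1 Lw2 span det0]]] := pseudolattice_basis hL.
have /intrP [z1 pair1] := dual _ Lw1.
have /intrP [z2 pair2] := dual _ Lw2.
have [m [tr1 tr2]] := trK_conj_mul_solvable d0 det0 z1%:~R z2%:~R.
exists m; split; first by apply: (Ldual_of_basis span); rewrite ?tr1 ?tr2 intr_int.
apply: (pairing_eq2 (Lam_det_neq0 t d0 det0)).
  by rewrite pair1 pairing_Lam tr1 ratr_int.
by rewrite pair2 pairing_Lam tr2 ratr_int.
Qed.
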